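(* Consider the fully discrete explicit splitting scheme described in the context, with mirrored boundary layers and initialisation $\boldsymbol{u}^0=\boldsymbol{f}$, and let the time step size satisfy $\tau\le\min\{\tau_1,\tau_2,\tau_3,\tau_4\}$ where $$\tau_1=\frac{h^2}{4(1-\nu)|p-1|},\quad \tau_2=\frac{h^2}{2\nu|p-1|},\quad \tau_3=\frac{h^2}{2\sqrt2(1-\nu)|2-p|},\quad \tau_4=\frac{h^2}{2\nu|2-p|}$$ (a quotient with vanishing denominator is read as $+\infty$). Then the scheme is $L^\infty$-stable, $\|\boldsymbol{u}^k\|_\infty\le\|\boldsymbol{u}^{k-1}\|_\infty$ for all $k\ge1$, and satisfies the discrete maximum–minimum principle $\min_{i,j}f_{i,j}\le u^k_{n,m}\le\max_{i,j}f_{i,j}$ for all grid indices $n,m$ and all $k\ge1$.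
   Context: The scheme discretises $u_t=(2-p)\,\mathrm{curv}(u)|\nabla u|+(p-1)\Delta u$ (for $p\ge1$) resp. $u_t=(2-p)\,\mathrm{curv}(u)|\nabla u|+(p-1)\operatorname{sgn}(|\nabla u|)\Delta u$ (for $p<1$), with $p\in\mathbb{R}$, on a rectangular grid of spacing $h$ with values $u_{i,j}$, given image $\boldsymbol{f}$, and weight $\nu\in(0,1)$ (the paper uses $\nu=\sqrt2-1$). Values outside the grid are defined by mirroring one or two layers of boundary pixels (homogeneous Neumann boundary conditions). Forward differences: $u^x_{i,j}=(u_{i+1,j}-u_{i,j})/h$, $u^y_{i,j}=(u_{i,j+1}-u_{i,j})/h$, $u^d_{i,j}=(u_{i+1,j+1}-u_{i,j})/(\sqrt2h)$, $u^e_{i,j}=(u_{i+1,j-1}-u_{i,j})/(\sqrt2h)$. Minmod: $\mathrm{M}(a,b,c)$ is the argument of minimal modulus if $ab\ge0$ and $ac\ge0$, and $0$ otherwise. Diffusion operators: for $p\ge1$, $\boldsymbol{D}_+(\boldsymbol u)_{i,j}=(p-1)(u_{i+1,j}+u_{i-1,j}+u_{i,j+1}+u_{i,j-1}-4u_{i,j})/h^2$ and $\boldsymbol{D}_\times(\boldsymbol u)_{i,j}=(p-1)(u_{i+1,j+1}+u_{i-1,j-1}+u_{i+1,j-1}+u_{i-1,j+1}-4u_{i,j})/(2h^2)$. For $p<1$, $\boldsymbol{D}_+(\boldsymbol u)_{i,j}=\frac{p-1}{h}\bigl(\mathrm{M}(u^x_{i+1,j},u^x_{i,j},u^x_{i-1,j})-\mathrm{M}(u^x_{i,j},u^x_{i-1,j},u^x_{i-2,j})+\mathrm{M}(u^y_{i,j+1},u^y_{i,j},u^y_{i,j-1})-\mathrm{M}(u^y_{i,j},u^y_{i,j-1},u^y_{i,j-2})\bigr)$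 and $\boldsymbol{D}_\times(\boldsymbol u)_{i,j}=\frac{p-1}{\sqrt2h}\bigl(\mathrm{M}(u^d_{i+1,j+1},u^d_{i,j},u^d_{i-1,j-1})-\mathrm{M}(u^d_{i,j},u^d_{i-1,j-1},u^d_{i-2,j-2})+\mathrm{M}(u^e_{i+1,j-1},u^e_{i,j},u^e_{i-1,j+1})-\mathrm{M}(u^e_{i,j},u^e_{i-1,j+1},u^e_{i-2,j+2})\bigr)$. Curvature: $c_{i,j}$ is the isophote curvature $(u_x^2u_{yy}-2u_xu_yu_{xy}+u_y^2u_{xx})/(u_x^2+u_y^2+\epsilon)^{3/2}$, $\epsilon=10^{-10}$, with derivatives approximated by central differences, then clipped to $[-2/h,2/h]$. Curvature operators: $\boldsymbol{M}_+(\boldsymbol u)_{i,j}=(2-p)c_{i,j}\,G^+_{i,j}$, $\boldsymbol{M}_\times(\boldsymbol u)_{i,j}=(2-p)c_{i,j}\,G^\times_{i,j}$, where (Rouy–Tourin upwinding) if $(2-p)c_{i,j}\ge0$ (dilation case) $G^+_{i,j}=\bigl(\max(-u^x_{i-1,j},u^x_{i,j},0)^2+\max(-u^y_{i,j-1},u^y_{i,j},0)^2\bigr)^{1/2}$ and $G^\times_{i,j}=\bigl(\max(-u^d_{i-1,j-1},u^d_{i,j},0)^2+\max(-u^e_{i-1,j+1},u^e_{i,j},0)^2\bigr)^{1/2}$, and otherwise (erosion case) $G^+_{i,j}=\bigl(\max(-u^x_{i,j},u^x_{i-1,j},0)^2+\max(-u^y_{i,j},u^y_{i,j-1},0)^2\bigr)^{1/2}$,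 $G^\times_{i,j}=\bigl(\max(-u^d_{i,j},u^d_{i-1,j-1},0)^2+\max(-u^e_{i,j},u^e_{i-1,j+1},0)^2\bigr)^{1/2}$. Scheme: $\boldsymbol u^{k+1/4}=\boldsymbol u^k+\tau(1-\nu)\boldsymbol D_+(\boldsymbol u^k)$, $\boldsymbol u^{k+1/2}=\boldsymbol u^{k+1/4}+\tau\nu\boldsymbol D_\times(\boldsymbol u^{k+1/4})$, $\boldsymbol u^{k+3/4}=\boldsymbol u^{k+1/2}+\tau(1-\nu)\boldsymbol M_+(\boldsymbol u^{k+1/2})$, $\boldsymbol u^{k+1}=\boldsymbol u^{k+3/4}+\tau\nu\boldsymbol M_\times(\boldsymbol u^{k+3/4})$. *)

From HB Require Import structures.
From mathcomp Require Import all_boot all_order all_algebra.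
From mathcomp Require Import reals.
Set Implicit Arguments. Unset Strict Implicit. Unset Printing Implicit Defensive.
Import Order.TTheory GRing.Theory Num.Theory.
Local Open Scope ring_scope.

Section Scheme.
Variable R : realType.

(* Only the
   values at indices 0 <= i < N, 0 <= j < M are ever read; all other values
   are obtained by mirroring (homogeneous Neumann boundary conditions). *)
Definition grid := int -> int -> R.

(* Mirror reflection of an integer index into [0, n): the sequence
   ... u_1 u_0 | u_0 u_1 ... u_{n-1} | u_{n-1} u_{n-2} ...  (period 2n).
   For one or two layers this gives u_{-1}=u_0, u_{-2}=u_1,
   u_n=u_{n-1}, u_{n+1}=u_{n-2}. *)
Definition refl (n : nat) (i : int) : int :=
  let r := (i %% (2 * n)%:Z)%Z in
  if r < n%:Z then r else (2 * n)%:Z - 1 - r.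

Definition ext (N M : nat) (u : grid) : grid :=
  fun i j => u (refl N i) (refl M j).

Definition minmod (a b c : R) : R :=
  if (0 <= a * b) && (0 <= a * c) then
    (if (`|a| <= `|b|) && (`|a| <= `|c|) then a
     else if `|b| <= `|c| then b else c)
  else 0.

Definition max3 (a b c : R) : R := Num.max a (Num.max b c).

Section Ops.
Variables (p h : R) (U : grid).

Definition dx i j := (U (i + 1) j - U i j) / h.
Definition dy i j := (U i (j + 1) - U i j) / h.
Definition dd i j := (U (i + 1) (j + 1) - U i j) / (Num.sqrt 2 * h).
Definition de i j := (U (i + 1) (j - 1) - U i j) / (Num.sqrt 2 * h).

Definition Dplus i j : R :=
  if 1 <= p then
    (p - 1) * (U (i + 1) j + U (i - 1) j + U i (j + 1) + U i (j - 1)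
               - 4 * U i j) / h ^+ 2
  else
    (p - 1) / h *
    (minmod (dx (i + 1) j) (dx i j) (dx (i - 1) j)
     - minmod (dx i j) (dx (i - 1) j) (dx (i - 2) j)
     + minmod (dy i (j + 1)) (dy i j) (dy i (j - 1))
     - minmod (dy i j) (dy i (j - 1)) (dy i (j - 2))).

Definition Dcross i j : R :=
  if 1 <= p then
    (p - 1) * (U (i + 1) (j + 1) + U (i - 1) (j - 1) + U (i + 1) (j - 1)
               + U (i - 1) (j + 1) - 4 * U i j) / (2 * h ^+ 2)
  else
    (p - 1) / (Num.sqrt 2 * h) *
    (minmod (dd (i + 1) (j + 1)) (dd i j) (dd (i - 1) (j - 1))
     - minmod (dd i j) (dd (i - 1) (j - 1)) (dd (i - 2) (j - 2))
     + minmod (de (i + 1) (j - 1)) (de i j) (de (i - 1) (j + 1))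
     - minmod (de i j) (de (i - 1) (j + 1)) (de (i - 2) (j + 2))).

Definition curv_eps : R := (10 ^+ 10)^-1.

(* isophote curvature with central differences, clipped to [-2/h, 2/h] *)
Definition curv i j : R :=
  let ux := (U (i + 1) j - U (i - 1) j) / (2 * h) in
  let uy := (U i (j + 1) - U i (j - 1)) / (2 * h) in
  let uxx := (U (i + 1) j - 2 * U i j + U (i - 1) j) / h ^+ 2 in
  let uyy := (U i (j + 1) - 2 * U i j + U i (j - 1)) / h ^+ 2 in
  let uxy := (U (i + 1) (j + 1) - U (i + 1) (j - 1)
              - U (i - 1) (j + 1) + U (i - 1) (j - 1)) / (4 * h ^+ 2) in
  let c := (ux ^+ 2 * uyy - 2 * ux * uy * uxy + uy ^+ 2 * uxx)
           / (Num.sqrt (ux ^+ 2 + uy ^+ 2 + curv_eps)) ^+ 3 in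
  Num.min (2 / h) (Num.max (- (2 / h)) c).

(* Rouy--Tourin upwind gradient norms *)
Definition Gplus i j : R :=
  if 0 <= (2 - p) * curv i j then
    Num.sqrt (max3 (- dx (i - 1) j) (dx i j) 0 ^+ 2
              + max3 (- dy i (j - 1)) (dy i j) 0 ^+ 2)
  else
    Num.sqrt (max3 (- dx i j) (dx (i - 1) j) 0 ^+ 2
              + max3 (- dy i j) (dy i (j - 1)) 0 ^+ 2).

Definition Gcross i j : R :=
  if 0 <= (2 - p) * curv i j then
    Num.sqrt (max3 (- dd (i - 1) (j - 1)) (dd i j) 0 ^+ 2
              + max3 (- de (i - 1) (j + 1)) (de i j) 0 ^+ 2)
  else
    Num.sqrt (max3 (- dd i j) (dd (i - 1) (j - 1)) 0 ^+ 2
              + max3 (- de i j) (de (i - 1) (j + 1)) 0 ^+ 2).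

Definition Mplus i j : R := (2 - p) * curv i j * Gplus i j.
Definition Mcross i j : R := (2 - p) * curv i j * Gcross i j.

End Ops.

Section Step.
Variables (N M : nat) (p h nu tau : R).

Definition step1 (u : grid) : grid :=
  fun i j => ext N M u i j + tau * (1 - nu) * Dplus p h (ext N M u) i j.
Definition step2 (u : grid) : grid :=
  fun i j => ext N M u i j + tau * nu * Dcross p h (ext N M u) i j.
Definition step3 (u : grid) : grid :=
  fun i j => ext N M u i j + tau * (1 - nu) * Mplus p h (ext N M u) i j.
Definition step4 (u : grid) : grid :=
  fun i j => ext N M u i j + tau * nu * Mcross p h (ext N M u) i j.

Definition scheme_step (u : grid) : grid := step4 (step3 (step2 (step1 u))).

Definition iterate (f : grid) (k : nat) : grid := iter k scheme_step f.

End Step.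

Definition supnorm (N M : nat) (u : grid) : R :=
  \big[Num.max/0]_(i < N) \big[Num.max/0]_(j < M) `|u i%:Z j%:Z|.

(* min / max of grid values (meaningful for N, M >= 1; (0,0) is a grid point) *)
Definition gridmax (N M : nat) (u : grid) : R :=
  \big[Num.max/u 0 0]_(i < N) \big[Num.max/u 0 0]_(j < M) u i%:Z j%:Z.
Definition gridmin (N M : nat) (u : grid) : R :=
  \big[Num.min/u 0 0]_(i < N) \big[Num.min/u 0 0]_(j < M) u i%:Z j%:Z.

End Scheme.

From HB Require Import structures.
From mathcomp Require Import all_boot all_order all_algebra.
From mathcomp Require Import reals ring lra zify.
Import Order.TTheory GRing.Theory Num.Theory.
Local Open Scope ring_scope.

(* Every substep is, pixel by pixel, an update of the centre value v that stays in any
   interval [lo, hi] containing v and its mirrored neighbours, provided the corresponding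
   time-step restriction holds.  For p >= 1 the diffusion substeps are convex combinations
   of v and four neighbours.  For p < 1 each minmod flux difference is at most
   min(hi - v, v - lo) divided by the grid distance, because minmod lies between 0 and
   each of its arguments.  The Rouy-Tourin substeps move v only upwards (dilation) or only
   downwards (erosion), by at most sqrt 2 times the largest difference to a neighbour in
   that direction, scaled by the time step and the clipped curvature.  Mirroring creates
   no new values, so every iterate stays in [min f, max f], and the choice
   [lo, hi] = [-||u||, ||u||] gives the L-infinity stability. *)

Set Implicit Arguments.
Unset Strict Implicit.

Section LocalUpdates.
Variables (R : realType) (lo hi : R).

Lemma add_in_range (v d : R) :
  `|d| <= Num.min (hi - v) (v - lo) -> lo <= v + d <= hi.
Proof.
by rewrite le_min !ler_norml => /andP[/andP[? ?] /andP[? ?]]; apply/andP; split; lra.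
Qed.

Lemma minmod_between (x y z : R) (r := minmod x y z) :
  [/\ Num.min 0 x <= r <= Num.max 0 x, Num.min 0 y <= r <= Num.max 0 y
    & Num.min 0 z <= r <= Num.max 0 z].
Proof.
rewrite /r /minmod; case: ifP => [/andP[xy xz]|_]; last by rewrite !ge_min !le_max !lexx.
case: (ltrgt0P x) => x0; last by rewrite !normr_ge0 /= -x0 !ge_min !le_max !lexx.
- have y0 : 0 <= y by rewrite -(pmulr_rge0 _ x0).
  have z0 : 0 <= z by rewrite -(pmulr_rge0 _ x0).
  have {}x0 := ltW x0.
  rewrite (ger0_norm y0) (ger0_norm z0) (min_l y0) (min_l z0).
  rewrite (max_r y0) (max_r z0).
  case: (lerP x y) => ?; case: (lerP x z) => ?; case: (lerP y z) => ? /=;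
    do !split; lra.
- have y0 : y <= 0 by rewrite -(nmulr_rge0 _ x0).
  have z0 : z <= 0 by rewrite -(nmulr_rge0 _ x0).
  have {}x0 := ltW x0.
  rewrite (ler0_norm y0) (ler0_norm z0) (min_r y0) (min_r z0).
  rewrite (max_l y0) (max_l z0).
  case: (lerP (- x) (- y)) => ?; case: (lerP (- x) (- z)) => ?;
    case: (lerP (- y) (- z)) => ? /=; do !split; lra.
Qed.

Lemma minmod_diff_le (e a b g X Y : R) :
  0 <= X -> 0 <= Y -> - Y <= a <= X -> - X <= b <= Y ->
  `|minmod e a b - minmod a b g| <= Num.min X Y.
Proof.
move=> ? ? /andP[? ?] /andP[? ?].
have [_ m1a m1b] := minmod_between e a b.
have [m2a m2b _] := minmod_between a b g.
case: (lerP 0 a) => a0; rewrite ?(min_l a0) ?(max_r a0) ?(min_r (ltW a0)) ?(max_l (ltW a0)) in m1a m2a;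
  case: (lerP 0 b) => b0; rewrite ?(min_l b0) ?(max_r b0) ?(min_r (ltW b0)) ?(max_l (ltW b0)) in m1b m2b;
  move: m1a m1b m2a m2b => /andP[? ?] /andP[? ?] /andP[? ?] /andP[? ?];
  by rewrite le_min !ler_norml; apply/andP; split; apply/andP; split; lra.
Qed.

(* The update lemmas are stated in the exact shape that [Dplus], [Dcross], [Mplus] and
   [Mcross] take once the forward differences are unfolded: [v] is the centre value,
   [a], [b] and [a'], [b'] its neighbours along two directions, at grid distance [c]. *)
Lemma five_point_update_in_range (k w d v a b a' b' : R) :
  lo <= v <= hi -> lo <= a <= hi -> lo <= b <= hi -> lo <= a' <= hi -> lo <= b' <= hi ->
  0 <= k -> 0 <= w -> 0 < d -> 4 * (k * w) <= d ->
  lo <= v + k * (w * (a + b + a' + b' - 4 * v) / d) <= hi.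
Proof.
move=> /andP[? ?] /andP[? ?] /andP[? ?] /andP[? ?] /andP[? ?] k0 w0 d0 kwd.
set L := k * w / d.
have L0 : 0 <= L by rewrite /L divr_ge0 ?mulr_ge0 // ltW.
have L4 : 4 * L <= 1 by rewrite /L !mulrA ler_pdivrMr // mul1r -mulrA.
rewrite (_ : k * _ = L * (a + b + a' + b' - 4 * v)); last by rewrite /L; field; rewrite lt0r_neq0.
apply/andP; split; nra.
Qed.

Lemma minmod_update_in_range (k w c v a b a' b' e g e' g' : R) :
  lo <= v <= hi -> lo <= a <= hi -> lo <= b <= hi -> lo <= a' <= hi -> lo <= b' <= hi ->
  0 <= k -> w <= 0 -> 0 < c -> 2 * (k * - w) <= c ^+ 2 ->
  lo <= v + k * (w / c *
    (minmod e ((a - v) / c) ((v - b) / c) - minmod ((a - v) / c) ((v - b) / c) g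
     + minmod e' ((a' - v) / c) ((v - b') / c) - minmod ((a' - v) / c) ((v - b') / c) g'))
    <= hi.
Proof.
move=> /andP[lv vh] ha hb ha' hb' k0 w0 c0 kwc.
set m := Num.min (hi - v) (v - lo).
have m0 : 0 <= m by rewrite le_min !subr_ge0 lv vh.
have ci0 : 0 <= c^-1 by rewrite invr_ge0 ltW.
have le_c x y : x <= y -> x / c <= y / c by move=> xy; rewrite ler_wpM2r.
have flux_le x y e0 g0 : lo <= x <= hi -> lo <= y <= hi ->
    `|minmod e0 ((x - v) / c) ((v - y) / c) - minmod ((x - v) / c) ((v - y) / c) g0| <= m / c.
  move=> /andP[? ?] /andP[? ?]; rewrite /m minr_pMl //.
  by apply: minmod_diff_le; rewrite ?divr_ge0 -?mulNr ?le_c ?subr_ge0 //=; lra.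
rewrite -addrA; set D1 := minmod _ _ _ - minmod _ _ _; set D2 := minmod _ _ _ - minmod _ _ _.
have K0 : 0 <= k * - w / c by rewrite divr_ge0 ?mulr_ge0 ?oppr_ge0 // ltW.
rewrite (_ : k * _ = - (k * - w / c * (D1 + D2))); last by ring.
apply: add_in_range; rewrite -/m normrN normrM (ger0_norm K0).
have D12 : `|D1 + D2| <= m / c + m / c by rewrite (le_trans (ler_normD _ _)) // lerD ?flux_le.
apply: le_trans (ler_wpM2l K0 D12) _.
rewrite (_ : k * - w / c * _ = 2 * (k * - w) * m / c ^+ 2); last by field; rewrite lt0r_neq0.
by rewrite ler_pdivrMr ?exprn_gt0 // mulrC ler_wpM2l.
Qed.

Lemma max3_0_between (x y z : R) : x <= z -> y <= z -> 0 <= z -> 0 <= max3 x y 0 <= z.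
Proof. by move=> xz yz z0; rewrite /max3 !le_max !ge_max lexx xz yz z0 !orbT. Qed.

Lemma sqrt_sum_sqr_le (x y z : R) : 0 <= x <= z -> 0 <= y <= z ->
  Num.sqrt (x ^+ 2 + y ^+ 2) <= Num.sqrt 2 * z.
Proof.
move=> /andP[x0 xz] /andP[y0 yz]; have z0 : 0 <= z by rewrite (le_trans x0).
rewrite -(ger0_norm z0) -sqrtr_sqr -sqrtrM ?ler0n // ler_sqrt ?mulr_ge0 ?sqr_ge0 //.
by rewrite mulr2n mulrDl mul1r lerD // ler_sqr.
Qed.

Lemma upwind_increment_in_range (k s c m G : R) :
  0 <= k -> 0 <= s -> 0 < c -> 0 <= m -> 0 <= G <= Num.sqrt 2 * (m / c) ->
  k * s * Num.sqrt 2 <= c -> 0 <= k * (s * G) <= m.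
Proof.
move=> k0 s0 c0 m0 /andP[G0 Gm] ksc.
rewrite !mulr_ge0 //=.
apply: le_trans (_ : k * (s * (Num.sqrt 2 * (m / c))) <= m).
  by rewrite ler_wpM2l // ler_wpM2l.
rewrite (_ : _ * _ = k * s * Num.sqrt 2 * m / c); last by field; rewrite lt0r_neq0.
by rewrite ler_pdivrMr // mulrC ler_wpM2l.
Qed.

Lemma upwind_update_in_range (k s c v a b a' b' : R) :
  lo <= v <= hi -> lo <= a <= hi -> lo <= b <= hi -> lo <= a' <= hi -> lo <= b' <= hi ->
  0 <= k -> 0 < c -> k * `|s| * Num.sqrt 2 <= c ->
  lo <= v + k * (s * (if 0 <= s then
      Num.sqrt (max3 (- ((v - b) / c)) ((a - v) / c) 0 ^+ 2
                + max3 (- ((v - b') / c)) ((a' - v) / c) 0 ^+ 2)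
    else
      Num.sqrt (max3 (- ((a - v) / c)) ((v - b) / c) 0 ^+ 2
                + max3 (- ((a' - v) / c)) ((v - b') / c) 0 ^+ 2))) <= hi.
Proof.
move=> /andP[lv vh] /andP[la ah] /andP[lb bh] /andP[la' ah'] /andP[lb' bh'] k0 c0 ksc.
have le_c x y : x <= y -> x / c <= y / c by move=> xy; rewrite ler_pM2r ?invr_gt0.
have G_between (m x y x' y' : R) : 0 <= m -> x <= m -> y <= m -> x' <= m -> y' <= m ->
    0 <= Num.sqrt (max3 x y 0 ^+ 2 + max3 x' y' 0 ^+ 2) <= Num.sqrt 2 * m.
  by move=> m0 *; rewrite sqrtr_ge0 sqrt_sum_sqr_le ?max3_0_between.
rewrite -!mulNr !opprB; case: ifP => s0.
- rewrite ger0_norm // in ksc.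
  have m0 : 0 <= hi - v by rewrite subr_ge0.
  have /andP[inc0 inc_le] := upwind_increment_in_range k0 s0 c0 m0
    (G_between _ _ _ _ _ (divr_ge0 m0 (ltW c0)) (le_c _ _ (lerB bh (lexx v)))
       (le_c _ _ (lerB ah (lexx v))) (le_c _ _ (lerB bh' (lexx v)))
       (le_c _ _ (lerB ah' (lexx v)))) ksc.
  lra.
- have s0' : 0 <= - s by rewrite oppr_ge0 ltW // ltNge s0.
  rewrite ler0_norm -?oppr_ge0 // in ksc.
  have m0 : 0 <= v - lo by rewrite subr_ge0.
  have /andP[inc0 inc_le] := upwind_increment_in_range k0 s0' c0 m0
    (G_between _ _ _ _ _ (divr_ge0 m0 (ltW c0)) (le_c _ _ (lerB (lexx v) la))
       (le_c _ _ (lerB (lexx v) lb)) (le_c _ _ (lerB (lexx v) la'))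
       (le_c _ _ (lerB (lexx v) lb'))) ksc.
  rewrite mulNr mulrN in inc0 inc_le; lra.
Qed.

End LocalUpdates.

Lemma le_mul_of_le_div (R : realType) (t x c D : R) :
  0 < c -> 0 <= D -> 0 <= x -> (D != 0 -> t <= x / (c * D)) -> t * (c * D) <= x.
Proof.
move=> c0 D0 x0 tD; have [->|D_neq0] := eqVneq D 0; first by rewrite !mulr0.
by rewrite -ler_pdivlMr ?tD // mulr_gt0 // lt0r D_neq0.
Qed.

Lemma curv_norm_le (R : realType) (h : R) (U : grid R) (i j : int) :
  0 < h -> `|curv h U i j| <= 2 / h.
Proof.
move=> h0; have b0 : 0 <= 2 / h by rewrite divr_ge0 // ltW.
have clip (x : R) : `|Num.min (2 / h) (Num.max (- (2 / h)) x)| <= 2 / h.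
  rewrite ler_norml; apply/andP; split; last by rewrite ge_min lexx.
  by rewrite le_min le_max lexx /= andbT; lra.
exact: clip.
Qed.

Section Substeps.
Variables (R : realType) (p h nu tau lo hi : R) (V : grid R).
Hypotheses (h_gt0 : 0 < h) (nu_gt0 : 0 < nu) (nu_lt1 : nu < 1) (tau_gt0 : 0 < tau).
Hypothesis V_in : forall i j, lo <= V i j <= hi.

Lemma Dplus_update_in_range (i j : int) :
  (`|p - 1| != 0 -> tau <= h ^+ 2 / (4 * (1 - nu) * `|p - 1|)) ->
  lo <= V i j + tau * (1 - nu) * Dplus p h V i j <= hi.
Proof.
move=> tau_le; have k0 : 0 <= tau * (1 - nu) by rewrite mulr_ge0 ?subr_ge0 ?ltW.
have c0 : 0 < 4 * (1 - nu) by rewrite mulr_gt0 ?subr_gt0.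
have := le_mul_of_le_div c0 (normr_ge0 (p - 1)) (sqr_ge0 h) tau_le.
rewrite /Dplus; case: ifP => p1.
- rewrite ger0_norm ?subr_ge0 // => cfl.
  apply: five_point_update_in_range; rewrite ?V_in ?subr_ge0 ?exprn_gt0 //; lra.
- have p_lt1 : p < 1 by rewrite ltNge p1.
  rewrite ltr0_norm ?subr_lt0 // => cfl.
  rewrite /dx /dy !subrK; apply: minmod_update_in_range; rewrite ?V_in //; [lra | nra].
Qed.

Lemma Dcross_update_in_range (i j : int) :
  (`|p - 1| != 0 -> tau <= h ^+ 2 / (2 * nu * `|p - 1|)) ->
  lo <= V i j + tau * nu * Dcross p h V i j <= hi.
Proof.
move=> tau_le; have k0 : 0 <= tau * nu by rewrite mulr_ge0 ?ltW.
have c0 : 0 < 2 * nu by rewrite mulr_gt0.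
have := le_mul_of_le_div c0 (normr_ge0 (p - 1)) (sqr_ge0 h) tau_le.
rewrite /Dcross; case: ifP => p1.
- rewrite ger0_norm ?subr_ge0 // => cfl.
  apply: five_point_update_in_range; rewrite ?V_in ?subr_ge0 ?mulr_gt0 ?exprn_gt0 //; lra.
- have p_lt1 : p < 1 by rewrite ltNge p1.
  rewrite ltr0_norm ?subr_lt0 // => cfl.
  rewrite /dd /de !subrK !addrK; apply: minmod_update_in_range;
    rewrite ?V_in ?mulr_gt0 ?sqrtr_gt0 // ?exprMn ?sqr_sqrtr //; [lra | nra].
Qed.

Lemma curvature_speed_le (k C : R) (i j : int) :
  0 <= k -> k * (2 * `|2 - p|) * Num.sqrt 2 <= C * h ->
  k * `|(2 - p) * curv h V i j| * Num.sqrt 2 <= C.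
Proof.
move=> k0 kC; rewrite normrM.
apply: le_trans (_ : k * (`|2 - p| * (2 / h)) * Num.sqrt 2 <= C).
  by rewrite ler_wpM2r ?sqrtr_ge0 // ler_wpM2l // ler_wpM2l // curv_norm_le.
rewrite (_ : _ * _ = k * (2 * `|2 - p|) * Num.sqrt 2 / h); last by field; rewrite lt0r_neq0.
by rewrite ler_pdivrMr.
Qed.

Lemma Mplus_update_in_range (i j : int) :
  (`|2 - p| != 0 -> tau <= h ^+ 2 / (2 * Num.sqrt 2 * (1 - nu) * `|2 - p|)) ->
  lo <= V i j + tau * (1 - nu) * Mplus p h V i j <= hi.
Proof.
move=> tau_le; have k0 : 0 <= tau * (1 - nu) by rewrite mulr_ge0 ?subr_ge0 ?ltW.
have c0 : 0 < 2 * Num.sqrt 2 * (1 - nu) by rewrite !mulr_gt0 ?sqrtr_gt0 ?subr_gt0.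
have cfl := le_mul_of_le_div c0 (normr_ge0 (2 - p)) (sqr_ge0 h) tau_le.
rewrite /Mplus /Gplus /dx /dy !subrK; apply: upwind_update_in_range; rewrite ?V_in //.
apply: curvature_speed_le => //.
rewrite (_ : tau * (1 - nu) * (2 * `|2 - p|) * Num.sqrt 2
              = tau * (2 * Num.sqrt 2 * (1 - nu) * `|2 - p|)); last by ring.
exact: cfl.
Qed.

Lemma Mcross_update_in_range (i j : int) :
  (`|2 - p| != 0 -> tau <= h ^+ 2 / (2 * nu * `|2 - p|)) ->
  lo <= V i j + tau * nu * Mcross p h V i j <= hi.
Proof.
move=> tau_le; have k0 : 0 <= tau * nu by rewrite mulr_ge0 ?ltW.
have c0 : 0 < 2 * nu by rewrite mulr_gt0.
have cfl := le_mul_of_le_div c0 (normr_ge0 (2 - p)) (sqr_ge0 h) tau_le.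
rewrite /Mcross /Gcross /dd /de !subrK !addrK; apply: upwind_update_in_range;
  rewrite ?V_in ?mulr_gt0 ?sqrtr_gt0 //.
apply: curvature_speed_le => //.
rewrite (_ : tau * nu * (2 * `|2 - p|) * Num.sqrt 2
              = Num.sqrt 2 * (tau * (2 * nu * `|2 - p|))); last by ring.
by rewrite -[_ * h * h]mulrA ler_pM2l ?sqrtr_gt0.
Qed.

End Substeps.

Lemma refl_in_range (n : nat) (i : int) : (0 < n)%N -> 0 <= refl n i < n%:Z.
Proof.
move=> n0; rewrite /refl.
have n2_gt0 : 0 < (2 * n)%:Z by rewrite ltz_nat muln_gt0.
have := modz_ge0 i (lt0r_neq0 n2_gt0); have := ltz_pmod i n2_gt0.
case: ifP => [-> _ -> //|/negbT]; rewrite -leNgt PoszM => *; apply/andP; split; lia.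
Qed.

Section Scheme.
Variables (R : realType) (N M : nat) (p h nu tau : R).
Hypotheses (N_gt0 : (0 < N)%N) (M_gt0 : (0 < M)%N).
Hypotheses (h_gt0 : 0 < h) (nu_gt0 : 0 < nu) (nu_lt1 : nu < 1) (tau_gt0 : 0 < tau).
Hypothesis tau_le_tau1 : `|p - 1| != 0 -> tau <= h ^+ 2 / (4 * (1 - nu) * `|p - 1|).
Hypothesis tau_le_tau2 : `|p - 1| != 0 -> tau <= h ^+ 2 / (2 * nu * `|p - 1|).
Hypothesis tau_le_tau3 :
  `|2 - p| != 0 -> tau <= h ^+ 2 / (2 * Num.sqrt 2 * (1 - nu) * `|2 - p|).
Hypothesis tau_le_tau4 : `|2 - p| != 0 -> tau <= h ^+ 2 / (2 * nu * `|2 - p|).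

Definition grid_in_range (lo hi : R) (u : grid R) : Prop :=
  forall i j : nat, (i < N)%N -> (j < M)%N -> lo <= u i%:Z j%:Z <= hi.

Lemma ext_in_range (lo hi : R) (u : grid R) :
  grid_in_range lo hi u -> forall i j, lo <= ext N M u i j <= hi.
Proof.
move=> u_in i j; rewrite /ext.
case: (refl N i) (refl_in_range i N_gt0) => // n; rewrite ltz_nat => /= n_lt.
case: (refl M j) (refl_in_range j M_gt0) => // m; rewrite ltz_nat => /= m_lt.
exact: u_in.
Qed.

Lemma scheme_step_in_range (lo hi : R) (u : grid R) :
  grid_in_range lo hi u -> forall i j, lo <= scheme_step N M p h nu tau u i j <= hi.
Proof.
move=> /ext_in_range u_in.
have u1_in i j : lo <= step1 N M p h nu tau u i j <= hi.
  exact: Dplus_update_in_range.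
have u2_in i j : lo <= step2 N M p h nu tau (step1 N M p h nu tau u) i j <= hi.
  by apply: Dcross_update_in_range => // ? ?; apply: u1_in.
have u3_in i j :
    lo <= step3 N M p h nu tau (step2 N M p h nu tau (step1 N M p h nu tau u)) i j <= hi.
  by apply: Mplus_update_in_range => // ? ?; apply: u2_in.
by move=> i j; apply: Mcross_update_in_range => // ? ?; apply: u3_in.
Qed.

Lemma iterate_in_range (lo hi : R) (f : grid R) (k : nat) :
  grid_in_range lo hi f -> grid_in_range lo hi (iterate N M p h nu tau f k).
Proof.
move=> f_in; elim: k => [//|k IHk] i j _ _.
exact: scheme_step_in_range.
Qed.

End Scheme.

Section GridBounds.
Variables (R : realType) (N M : nat) (u : grid R).

Lemma grid_in_range_minmax : grid_in_range N M (gridmin N M u) (gridmax N M u) u.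
Proof.
move=> i j iN jM; apply/andP; split.
- exact: le_trans (bigmin_le _ (Ordinal iN) _) (bigmin_le _ (Ordinal jM) _).
- exact: le_trans (le_bigmax _ _ (Ordinal jM)) (le_bigmax _ _ (Ordinal iN)).
Qed.

Lemma grid_in_range_supnorm : grid_in_range N M (- supnorm N M u) (supnorm N M u) u.
Proof.
move=> i j iN jM; rewrite -ler_norml.
exact: le_trans (le_bigmax _ _ (Ordinal jM)) (le_bigmax _ _ (Ordinal iN)).
Qed.

Lemma supnorm_le (S : R) : 0 <= S -> grid_in_range N M (- S) S u -> supnorm N M u <= S.
Proof.
move=> S0 u_in; apply: bigmax_le => // i _; apply: bigmax_le => // j _.
by rewrite ler_norml u_in.
Qed.

End GridBounds.

Theorem proposition7 (R : realType) (N M : nat) (p h nu tau : R)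
    (f : grid R) :
  (0 < N)%N -> (0 < M)%N ->
  0 < h -> 0 < nu -> nu < 1 -> 0 < tau ->
  (`|p - 1| != 0 -> tau <= h ^+ 2 / (4 * (1 - nu) * `|p - 1|)) ->
  (`|p - 1| != 0 -> tau <= h ^+ 2 / (2 * nu * `|p - 1|)) ->
  (`|2 - p| != 0 -> tau <= h ^+ 2 / (2 * Num.sqrt 2 * (1 - nu) * `|2 - p|)) ->
  (`|2 - p| != 0 -> tau <= h ^+ 2 / (2 * nu * `|2 - p|)) ->
  (forall k : nat, (1 <= k)%N ->
     supnorm N M (iterate N M p h nu tau f k)
       <= supnorm N M (iterate N M p h nu tau f k.-1)) /\
  (forall (k n m : nat), (1 <= k)%N -> (n < N)%N -> (m < M)%N ->
     gridmin N M f <= iterate N M p h nu tau f k n%:Z m%:Z <= gridmax N M f).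
Proof.
move=> N_gt0 M_gt0 h_gt0 nu_gt0 nu_lt1 tau_gt0 tau_le_tau1 tau_le_tau2 tau_le_tau3 tau_le_tau4.
split.
- case=> [//|k] _ /=; set u := iterate N M p h nu tau f k.
  have S_ge0 : 0 <= supnorm N M u.
    by have /andP[] := grid_in_range_supnorm u N_gt0 M_gt0; lra.
  apply: supnorm_le => // i j _ _.
  by apply: scheme_step_in_range => //; apply: grid_in_range_supnorm.
- move=> k n m _; apply: iterate_in_range => //; exact: grid_in_range_minmax.
Qed.
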